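(* Let $G=(V,E)$ be a finite, connected graph with vertex set $V=\{v_1,\dots,v_n\}$, let $W:V\to\mathbb{R}$ be an arbitrary potential, and let $L=D-A$ be the graph Laplacian, where $D$ is the diagonal degree matrix and $A$ is the adjacency matrix. Suppose $\phi:V\to\mathbb{R}$ and $E\in\mathbb{R}$ satisfy $L\phi+W\phi=E\phi$. Then for all $v\in V$, $$|\phi(v)|\le e^{-\rho_E(v)}\cdot\|\phi\|_{\ell^\infty},$$ where $$\rho_E(v)=\inf\left\{\sum_{i=1}^{\ell}\log\left(1+\frac{(W(v_i)-E)_+}{\deg(v_i)}\right): v=v_1\to v_2\to\dots\to v_\ell \text{ is a path in } G \text{ with } W(v_\ell)\le E\right\},$$ and $(x)_+=\max\{x,0\}$.
   Context: $D\in\mathbb{R}^{n\times n}$ is diagonal with $d_{ii}=\deg(v_i)$; $A_{ij}=1$ if $(v_i,v_j)\in E$ and $0$ otherwise; $(W\phi)(v)=W(v)\phi(v)$. The infimum in $\rho_E(v)$ ranges over all paths starting at $v$ and ending at some vertex in the ''allowed region'' $\{u\in V: W(u)\le E\}$ (in particular $\rho_E(v)=0$ if $W(v)\le E$). $\|\phi\|_{\ell^\infty}=\max_{u\in V}|\phi(u)|$. *)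

From HB Require Import structures.
From mathcomp Require Import all_boot all_order all_algebra.
From mathcomp Require Import all_classical all_reals all_analysis.
Set Implicit Arguments. Unset Strict Implicit. Unset Printing Implicit Defensive.
Import Order.TTheory GRing.Theory Num.Theory.
Local Open Scope ring_scope.
Local Open Scope classical_set_scope.

Definition simple_graph (V : finType) (e : rel V) : Prop :=
  symmetric e /\ irreflexive e.

Definition graph_connected (V : finType) (e : rel V) : Prop :=
  forall x y : V, connect e x y.

Definition deg (V : finType) (e : rel V) (x : V) : nat := #|[set y | e x y]|.

Definition schrodinger_eq (R : realType) (V : finType) (e : rel V)
    (W phi : V -> R) (E : R) : Prop :=
  forall v : V,
    (deg e v)%:R * phi v - \sum_(u | e v u) phi u + W v * phi v = E * phi v.

Definition pospart (R : realType) (x : R) : R := Num.max x 0.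

Definition vweight (R : realType) (V : finType) (e : rel V)
    (W : V -> R) (E : R) (x : V) : R :=
  ln (1 + pospart (W x - E) / (deg e x)%:R).

(* a path v = v_1 -> ... -> v_l in G is represented by v :: s with
   consecutive vertices adjacent and all vertices distinct *)
Definition is_path_from (V : finType) (e : rel V) (v : V) (s : seq V) : Prop :=
  path e v s /\ uniq (v :: s).

(* rho_E(v) as an extended real infimum (= +oo if no admissible path) *)
Definition rhoE (R : realType) (V : finType) (e : rel V)
    (W : V -> R) (E : R) (v : V) : \bar R :=
  ereal_inf [set ((\sum_(x <- v :: s) vweight e W E x)%:E : \bar R) |
             s in [set s : seq V | is_path_from e v s /\ W (last v s) <= E]].

Definition linf_norm (R : realType) (V : finType) (phi : V -> R) : R :=
  \big[Num.max/0]_(u : V) `|phi u|.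

From HB Require Import structures.
From mathcomp Require Import all_boot all_order all_algebra.
From mathcomp Require Import all_classical all_reals all_analysis.
From mathcomp.algebra_tactics Require Import ring lra.
Import Order.TTheory GRing.Theory Num.Theory.
Local Open Scope ring_scope.
Set Implicit Arguments. Unset Strict Implicit.

(** The function [h v = exp (- rho_E v)] equals 1 on the allowed region and,
    since a path through a neighbour [u] of [v] can be extended back to [v],
    satisfies [h u <= (1 + (W v - E) / deg v) h v] off it: [h] is a
    supersolution of [(L + W - E) h >= 0] outside the allowed region.  A
    maximum principle for [|phi| - ||phi||_oo h] then gives [|phi| <= ||phi||_oo h]. *)

Section Schrodinger.

Variables (R : realType) (V : finType) (e : rel V) (W : V -> R) (E : R).

Lemma sum_adj_const (v : V) (c : R) : \sum_(u | e v u) c = c * (deg e v)%:R.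
Proof.
rewrite (eq_bigl (mem [set y | e v y]%classic)) ?sumr_const ?mulr_natr //.
by move=> y /=; apply/idP/idP => [/mem_set|/set_mem].
Qed.

Lemma schrodinger_eq_norm_le (phi : V -> R) (v : V) :
  schrodinger_eq e W phi E -> E < W v ->
  ((deg e v)%:R + (W v - E)) * `|phi v| <= \sum_(u | e v u) `|phi u|.
Proof.
move=> Hphi hv.
have eq_sum : ((deg e v)%:R + (W v - E)) * phi v = \sum_(u | e v u) phi u.
  have -> : \sum_(u | e v u) phi u =
            (deg e v)%:R * phi v + W v * phi v - E * phi v.
    by rewrite -(Hphi v); ring.
  by ring.
have da_ge0 : 0 <= (deg e v)%:R + (W v - E) by rewrite addr_ge0 // subr_ge0 ltW.
by rewrite -{1}(ger0_norm da_ge0) -normrM eq_sum ler_norm_sum.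
Qed.

Lemma schrodinger_eq_comparison (phi h : V -> R) :
  schrodinger_eq e W phi E ->
  (forall v, 0 <= h v) ->
  (forall v, W v <= E -> 1 <= h v) ->
  (forall v, E < W v ->
     \sum_(u | e v u) h u <= ((deg e v)%:R + (W v - E)) * h v) ->
  forall v, `|phi v| <= linf_norm phi * h v.
Proof.
move=> Hphi h_ge0 h_allowed h_super v.
set M := linf_norm phi.
have M_ge : forall x, `|phi x| <= M.
  by move=> x; rewrite /M /linf_norm (bigD1 x) //= le_max lexx.
have M_ge0 : 0 <= M by apply: le_trans (normr_ge0 _) (M_ge v).
pose f x := `|phi x| - M * h x.
rewrite -subr_le0 -/(f v).
have [x0 _ f_max] := @arg_maxP _ _ _ v xpredT f isT.
apply: le_trans (f_max v isT) _.
have [x0_allowed|x0_forbidden] := leP (W x0) E.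
  by rewrite subr_le0 (le_trans (M_ge x0)) // -{1}(mulr1 M) ler_wpM2l ?h_allowed.
pose d : R := (deg e x0)%:R; pose a := W x0 - E.
have a_gt0 : 0 < a by rewrite subr_gt0.
have phi_le := schrodinger_eq_norm_le Hphi x0_forbidden.
have nbrs_le : \sum_(u | e x0 u) `|phi u| <= d * f x0 + M * \sum_(u | e x0 u) h u.
  rewrite mulr_sumr mulrC -sum_adj_const -big_split /=.
  by apply: ler_sum => u _; rewrite -lerBlDr; apply: f_max.
have h_nbrs := ler_wpM2l M_ge0 (h_super x0 x0_forbidden).
have phi_x0 : `|phi x0| = f x0 + M * h x0 by rewrite /f subrK.
rewrite phi_x0 -/d -/a in phi_le; rewrite -/d -/a in h_nbrs.
suff : a * f x0 <= 0 by rewrite pmulr_rle0.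
nra.
Qed.

Lemma vweight_ge0 (x : V) : 0 <= vweight e W E x.
Proof.
rewrite /vweight ln_ge0 // lerDl divr_ge0 //.
by rewrite /pospart le_max lexx orbT.
Qed.

Lemma vweight_allowed (x : V) : W x <= E -> vweight e W E x = 0.
Proof.
by move=> hx; rewrite /vweight /pospart max_r ?subr_le0 // mul0r addr0 ln1.
Qed.

Lemma vweight_forbidden (x : V) : E < W x ->
  vweight e W E x = ln (1 + (W x - E) / (deg e x)%:R).
Proof. by move=> hx; rewrite /vweight /pospart max_l // subr_ge0 ltW. Qed.

Lemma rhoE_ge0 (v : V) : (0 <= rhoE e W E v)%E.
Proof.
apply/ereal_infP => _ [s _ <-].
by rewrite lee_fin sumr_ge0 // => x _; apply: vweight_ge0.
Qed.

Lemma rhoE_allowed (v : V) : W v <= E -> (rhoE e W E v <= 0)%E.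
Proof.
move=> hv; apply: ge_ereal_inf; exists (\sum_(x <- [:: v]) vweight e W E x)%:E.
  by exists [::].
by rewrite big_seq1 vweight_allowed.
Qed.

Lemma rhoE_le_path (v : V) (s : seq V) (r : R) :
  is_path_from e v s -> W (last v s) <= E ->
  \sum_(x <- v :: s) vweight e W E x <= r -> (rhoE e W E v <= r%:E)%E.
Proof.
move=> ps hs le_r; apply: ge_ereal_inf.
by exists (\sum_(x <- v :: s) vweight e W E x)%:E; [exists s | rewrite lee_fin].
Qed.

(** A path from a neighbour [u] of [v], prefixed by [v], may revisit [v];
    then its tail after that visit is itself an admissible path from [v]. *)
Lemma rhoE_adj_path (v u : V) (s : seq V) :
  e v u -> is_path_from e u s -> W (last u s) <= E ->
  (rhoE e W E v <= (vweight e W E v + \sum_(x <- u :: s) vweight e W E x)%:E)%E.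
Proof.
move=> evu [pus uus] hs.
have sum_ge0 (t : seq V) : 0 <= \sum_(x <- t) vweight e W E x.
  by rewrite sumr_ge0 // => x _; apply: vweight_ge0.
have [<-|nvu] := eqVneq u v.
  by apply: (rhoE_le_path (conj pus uus)) => //; rewrite lerDr vweight_ge0.
have [vs|nvs] := boolP (v \in s); last first.
  apply: (rhoE_le_path (s := u :: s)) => //; last by rewrite big_cons.
  split; first by rewrite /= evu.
  by rewrite cons_uniq uus in_cons negb_or eq_sym nvu nvs.
move: pus uus hs; case/splitPr: vs => p1 p2.
rewrite cat_path last_cat /= => /andP[_ /andP[_ pp2]].
rewrite -cat_cons cat_uniq => /and3P[_ _ /andP[_ up2]] hs.
apply: (rhoE_le_path (conj pp2 up2)) => //.
by rewrite big_cat /= addrA lerDr addr_ge0 // vweight_ge0.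
Qed.

Lemma rhoE_adj (v u : V) :
  e v u -> (rhoE e W E v <= (vweight e W E v)%:E + rhoE e W E u)%E.
Proof.
move=> evu; rewrite -leeBlDl //; apply/ereal_infP => _ [s [ps hs] <-].
by rewrite leeBlDl // -EFinD; apply: rhoE_adj_path.
Qed.

Definition decay (v : V) : R := fine (expeR (- rhoE e W E v)).

Lemma decayE (v : V) : (decay v)%:E = expeR (- rhoE e W E v).
Proof. by rewrite /decay; have := rhoE_ge0 v; case: (rhoE e W E v). Qed.

Lemma decay_ge0 (v : V) : 0 <= decay v.
Proof. by rewrite -lee_fin decayE expeR_ge0. Qed.

Lemma decay_allowed (v : V) : W v <= E -> 1 <= decay v.
Proof.
by move=> hv; rewrite -lee_fin decayE -expeR0 lee_expeR oppe_ge0 rhoE_allowed.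
Qed.

Lemma decay_adj (v u : V) : e v u -> decay u <= expR (vweight e W E v) * decay v.
Proof.
move=> evu; rewrite -lee_fin EFinM !decayE.
have -> : (expR (vweight e W E v))%:E = expeR (vweight e W E v)%:E by [].
by rewrite -expeRD lee_expeR leeNl oppeB // addeC leeBlDl // rhoE_adj.
Qed.

Lemma decay_supersolution (v : V) : E < W v ->
  \sum_(u | e v u) decay u <= ((deg e v)%:R + (W v - E)) * decay v.
Proof.
move=> hv; set d : R := (deg e v)%:R; set a := W v - E.
have a_ge0 : 0 <= a by rewrite subr_ge0 ltW.
have nbrs_le : \sum_(u | e v u) decay u <=
                \sum_(u | e v u) expR (vweight e W E v) * decay v.
  by apply: ler_sum => u; apply: decay_adj.
apply: le_trans nbrs_le _.
rewrite sum_adj_const vweight_forbidden // -/d -/a lnK; last first.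
  by rewrite posrE ltr_wpDr // divr_ge0.
rewrite mulrAC ler_wpM2r ?decay_ge0 // mulrDl mul1r lerD2l.
(* [d] may be [0], in which case [a / d = 0]. *)
by have [->|d_neq0] := eqVneq d 0; rewrite ?mulr0 // divfK.
Qed.

End Schrodinger.

Theorem mainTheorem1 (R : realType) (V : finType) (e : rel V)
    (W phi : V -> R) (E : R) :
  simple_graph e -> graph_connected e ->
  schrodinger_eq e W phi E ->
  forall v : V,
    ((`|phi v|)%:E <= expeR (- rhoE e W E v) * (linf_norm phi)%:E)%E.
Proof.
move=> _ _ Hphi v.
rewrite -decayE -EFinM lee_fin mulrC.
apply: schrodinger_eq_comparison Hphi _ _ _ v.
- exact: decay_ge0.
- exact: decay_allowed.
- exact: decay_supersolution.
Qed.
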